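(* In the abruptly-changing incentivized bandit with reward drift where the principal uses Discounted UCB (as in the context), for all arms $a\in\{1,\dots,K\}$ and all $t\in\{1,\dots,T\}$, $$D_t(\gamma,a)\le 2l\,N_t(a)\sqrt{\xi\log(n_t(\gamma))}.$$
   Context: Arms $\{1,\dots,K\}$, horizon $T$; true rewards $X_t(a)\in[0,1]$ independent with means $\mu_t(a)$. Protocol: the principal recommends $a_t$ by Discounted UCB; greedy choice $g_t=\arg\max_a\bar X_t(\gamma,a)$; if $a_t\ne g_t$ the principal pays $\chi_t=\bar X_t(\gamma,g_t)-\bar X_t(\gamma,a_t)$ and the observed reward is $r_t=X_t(a_t)+\delta_t$, $\delta_t=f_t(\chi_t)$; otherwise $\delta_t=0$ and $r_t=X_t(a_t)$. Each $f_t$ is non-decreasing, $f_t(0)=0$, Lipschitz with constant $l_t$; $l=\max_tl_t$. Discounted UCB ($\gamma\in(0,1)$, constant $\xi$): $N_t(\gamma,a)=\sum_{s\le t}\gamma^{t-s}\mathbf 1(a_s=a)$, $n_t(\gamma)=\sum_aN_t(\gamma,a)$, $\bar X_t(\gamma,a)=\frac1{N_t(\gamma,a)}\sum_{s\le t}\gamma^{t-s}\mathbf1(a_s=a)r_s$, $c_t(\gamma,a)=2\sqrt{\xi\log n_t(\gamma)/N_t(\gamma,a)}$; pull arm $t$ for $t\le K$, then $\arg\max_a\bar X_t(\gamma,a)+c_t(\gamma,a)$. $N_t(a)=\sum_{s\le t}\mathbf 1(a_s=a)$ is the undiscounted number of pulls, and $D_t(\gamma,a)=\sum_{s\le t}\mathbf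 1(a_s=a)\delta_s$ is the total reward drift contributed by arm $a$ up to time $t$. *)

From HB Require Import structures.
From mathcomp Require Import all_boot all_order all_algebra.
From mathcomp Require Import reals exp.
Set Implicit Arguments. Unset Strict Implicit. Unset Printing Implicit Defensive.
Import Order.TTheory GRing.Theory Num.Theory.
Local Open Scope ring_scope.

Section Bandit.
Variables (R : realType) (K : nat).
(* a : nat -> 'I_K  is the sequence of recommended arms a_1, a_2, ... (index 0 unused);
   r : nat -> R     is the sequence of observed rewards r_1, r_2, ... *)

Definition Ndisc (gamma : R) (a : nat -> 'I_K) (t : nat) (k : 'I_K) : R :=
  \sum_(1 <= s < t.+1) gamma ^+ (t - s) * (a s == k)%:R.

Definition ndisc (gamma : R) (a : nat -> 'I_K) (t : nat) : R :=
  \sum_(k < K) Ndisc gamma a t k.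

Definition Xbar (gamma : R) (a : nat -> 'I_K) (r : nat -> R) (t : nat) (k : 'I_K) : R :=
  (\sum_(1 <= s < t.+1) gamma ^+ (t - s) * (a s == k)%:R * r s) / Ndisc gamma a t k.

Definition cbonus (xi gamma : R) (a : nat -> 'I_K) (t : nat) (k : 'I_K) : R :=
  2 * Num.sqrt (xi * ln (ndisc gamma a t) / Ndisc gamma a t k).

Definition Npulls (a : nat -> 'I_K) (t : nat) (k : 'I_K) : nat :=
  \sum_(1 <= s < t.+1) (a s == k).

Definition Ddrift (a : nat -> 'I_K) (delta : nat -> R) (t : nat) (k : 'I_K) : R :=
  \sum_(1 <= s < t.+1) (a s == k)%:R * delta s.

End Bandit.

(** In a round where arm [k] is recommended against the greedy arm, UCB
    optimality of [a_s] over [g_s] gives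
    [chi_s <= c_s(gamma, a_s) - c_s(gamma, g_s) <= c_s(gamma, a_s)], so
    monotonicity, [f_s(0) = 0] and the Lipschitz bound yield
    [delta_s <= l c_s(gamma, a_s)].  As the arm just pulled has
    [N_s(gamma, a_s) >= 1] and [1 <= n_s(gamma) <= n_t(gamma)], this bonus is
    at most [2 sqrt(xi log n_t(gamma))]; summing over the [N_t(k)] pulls of [k]
    gives the bound. *)
From HB Require Import structures.
From mathcomp Require Import all_boot all_order all_algebra.
From mathcomp Require Import reals exp.
From mathcomp Require Import lra.
Set Implicit Arguments. Unset Strict Implicit. Unset Printing Implicit Defensive.
Import Order.TTheory GRing.Theory Num.Theory.
Local Open Scope ring_scope.

(* [Num.sqrt] vanishes on nonpositive arguments, so no sign condition on [y]
   or [xi] is needed below. *)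
Section SqrtBounds.
Variable R : realType.

Lemma sqrtr_divr_le (y N : R) : 1 <= N -> Num.sqrt (y / N) <= Num.sqrt y.
Proof.
move=> N1; have N0 : 0 < N := lt_le_trans ltr01 N1.
have [y0|y0] := lerP y 0.
  by rewrite ler0_sqrtr ?sqrtr_ge0 // pmulr_lle0 ?invr_gt0.
by apply: ler_wsqrtr; rewrite ler_pdivrMr // ler_peMr // ltW.
Qed.

Lemma ler_sqrt_mul_ln (xi x y : R) :
  1 <= x -> x <= y -> Num.sqrt (xi * ln x) <= Num.sqrt (xi * ln y).
Proof.
move=> x1 xy; have [xi0|xi0] := lerP xi 0.
  by rewrite ler0_sqrtr ?sqrtr_ge0 // mulr_le0_ge0 // ln_ge0.
have x0 : 0 < x := lt_le_trans ltr01 x1.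
apply/ler_wsqrtr/ler_wpM2l; first exact: ltW.
by rewrite ler_ln ?posrE // (lt_le_trans x0 xy).
Qed.

End SqrtBounds.

Lemma lipschitz0_le (R : realType) (f : R -> R) (L x c : R) :
  {homo f : u v / u <= v} -> f 0 = 0 ->
  (forall u v, `|f u - f v| <= L * `|u - v|) ->
  0 <= c -> x <= c -> f x <= L * c.
Proof.
move=> f_homo f0 f_lip c0 xc; apply: le_trans (f_homo _ _ xc) _.
have := f_lip c 0; rewrite f0 !subr0 (ger0_norm c0).
exact/le_trans/ler_norm.
Qed.

Section DiscountedCounts.
Variables (R : realType) (K : nat) (gamma : R) (a : nat -> 'I_K).

Lemma Ndisc_S t k :
  Ndisc gamma a t.+1 k = gamma * Ndisc gamma a t k + (a t.+1 == k)%:R.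
Proof.
rewrite /Ndisc big_nat_recr //= subnn expr0 mul1r big_distrr; congr (_ + _).
by apply: eq_big_nat => s /andP[_ st]; rewrite subSn // exprS -mulrA.
Qed.

Lemma sum_indicator (j : 'I_K) : \sum_(k < K) (j == k)%:R = 1 :> R.
Proof.
rewrite (bigD1 j) //= eqxx big1 ?addr0 // => k /negbTE.
by rewrite eq_sym => ->.
Qed.

Lemma ndiscE t : ndisc gamma a t = \sum_(i < t) gamma ^+ i.
Proof.
elim: t => [|t IH].
  by rewrite /ndisc big_ord0 big1 // => k _; rewrite /Ndisc big_geq.
rewrite /ndisc; under eq_bigr => k _ do rewrite Ndisc_S.
rewrite big_split /= -big_distrr /= -/(ndisc gamma a t) IH sum_indicator.
rewrite big_ord_recl expr0 addrC big_distrr; congr (_ + _).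
by apply: eq_bigr => i _; rewrite exprS.
Qed.

Hypothesis gamma_ge0 : 0 <= gamma.

Lemma ndisc_ge1 t : (1 <= t)%N -> 1 <= ndisc gamma a t.
Proof.
case: t => // t _; rewrite ndiscE big_ord_recl expr0 lerDl.
by apply: sumr_ge0 => i _; rewrite exprn_ge0.
Qed.

Lemma ndisc_homo : {homo ndisc gamma a : s t / (s <= t)%N >-> s <= t}.
Proof.
apply: homo_leq => [//|y x z|t]; first exact: le_trans.
by rewrite !ndiscE big_ord_recr lerDl exprn_ge0.
Qed.

Lemma Ndisc_ge0 t k : 0 <= Ndisc gamma a t k.
Proof. by apply: sumr_ge0 => s _; rewrite mulr_ge0 ?exprn_ge0. Qed.

Lemma Ndisc_pulled_ge1 t : (1 <= t)%N -> 1 <= Ndisc gamma a t (a t).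
Proof. by case: t => // t _; rewrite Ndisc_S eqxx lerDr mulr_ge0 ?Ndisc_ge0. Qed.

End DiscountedCounts.

Section Bonus.
Variables (R : realType) (K : nat) (xi gamma : R) (a : nat -> 'I_K).

Lemma cbonus_ge0 t k : 0 <= cbonus xi gamma a t k.
Proof. by rewrite mulr_ge0 ?sqrtr_ge0. Qed.

Lemma cbonus_pulled_le s t : 0 <= gamma -> (1 <= s <= t)%N ->
  cbonus xi gamma a s (a s) <= 2 * Num.sqrt (xi * ln (ndisc gamma a t)).
Proof.
move=> gamma0 /andP[s1 st]; apply: ler_wpM2l => //.
apply: le_trans (sqrtr_divr_le _ (Ndisc_pulled_ge1 a gamma0 s1)) _.
by rewrite ler_sqrt_mul_ln ?ndisc_ge1 ?ndisc_homo.
Qed.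

End Bonus.

Lemma Ddrift_le_Npulls (R : realType) (K : nat) (a : nat -> 'I_K)
    (delta : nat -> R) (B : R) (t : nat) (k : 'I_K) :
  (forall s, (1 <= s <= t)%N -> a s = k -> delta s <= B) ->
  Ddrift a delta t k <= (Npulls a t k)%:R * B.
Proof.
move=> delta_le; rewrite /Ddrift /Npulls natr_sum big_distrl /=.
apply: ler_sum_nat => s s_range; case: eqP => [ask|_]; last by rewrite !mul0r.
by rewrite !mul1r delta_le.
Qed.

Theorem lemma2 (R : realType) (K T : nat) (gamma xi : R)
  (X : nat -> 'I_K -> R) (f : nat -> R -> R) (lt : nat -> R) (l : R)
  (a g : nat -> 'I_K) (r delta : nat -> R) :
  0 < gamma < 1 ->
  (* true rewards in [0,1] *)
  (forall t k, 0 <= X t k <= 1) ->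
  (* drift functions: non-decreasing, f_t(0) = 0, Lipschitz with constant l_t *)
  (forall t x y, x <= y -> f t x <= f t y) ->
  (forall t, f t 0 = 0) ->
  (forall t x y, `|f t x - f t y| <= lt t * `|x - y|) ->
  l = \big[Num.max/0]_(1 <= t < T.+1) lt t ->
  (* Discounted UCB: initialisation pulls arm t at rounds t <= K ... *)
  (forall t, (1 <= t <= T)%N -> (t <= K)%N -> nat_of_ord (a t) = t.-1) ->
  (* ... then the arm maximising Xbar + c *)
  (forall t, (1 <= t <= T)%N -> (K < t)%N -> forall k,
     Xbar gamma a r t k + cbonus xi gamma a t k
       <= Xbar gamma a r t (a t) + cbonus xi gamma a t (a t)) ->
  (* greedy choice *)
  (forall t, (1 <= t <= T)%N -> forall k, Xbar gamma a r t k <= Xbar gamma a r t (g t)) ->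
  (* incentives and drift *)
  (forall t, (1 <= t <= T)%N ->
     delta t = if (K < t)%N && (a t != g t)
               then f t (Xbar gamma a r t (g t) - Xbar gamma a r t (a t)) else 0) ->
  (forall t, (1 <= t <= T)%N -> r t = X t (a t) + delta t) ->
  forall (k : 'I_K) (t : nat), (1 <= t <= T)%N ->
    Ddrift a delta t k
      <= 2 * l * (Npulls a t k)%:R * Num.sqrt (xi * ln (ndisc gamma a t)).
Proof.
move=> /andP[/ltW gamma0 _] _ f_homo f0 f_lip l_def _ ucb _ delta_def _ k t
  /andP[_ tT].
set S := Num.sqrt _; rewrite mulrAC mulrC -mulrA.
have l0 : 0 <= l by rewrite l_def bigmax_ge_id.
apply: Ddrift_le_Npulls => s /andP[s1 st] _.
have sT : (1 <= s <= T)%N by rewrite s1 (leq_trans st tT).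
rewrite delta_def //.
case: ifP => [/andP[Ks _]|_]; last by rewrite !mulr_ge0 ?sqrtr_ge0.
have gap_le : Xbar gamma a r s (g s) - Xbar gamma a r s (a s)
               <= cbonus xi gamma a s (a s).
  by have := ucb s sT Ks (g s); have := cbonus_ge0 xi gamma a s (g s); lra.
have lt_le : lt s <= l.
  by rewrite l_def; apply: le_bigmax_seq; rewrite ?mem_index_iota.
have c0 := cbonus_ge0 xi gamma a s (a s).
apply: le_trans (lipschitz0_le (f_homo s) (f0 s) (f_lip s) c0 gap_le) _.
apply: le_trans (ler_wpM2r c0 lt_le) _.
by rewrite mulrCA ler_wpM2l // cbonus_pulled_le // s1.
Qed.
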